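(* Let $c>0$, $\lambda>0$ and, for $t>0$ and $\mathbf{x}\in\mathbb{R}^3$ with $\|\mathbf{x}\|<ct$, let $$u(\mathbf{x},t)=\frac{e^{-\lambda t}}{\pi}\left(\frac{\lambda}{2c}\right)^2\frac{1}{\sqrt{c^2t^2-\|\mathbf{x}\|^2}}\,I_1\!\left(\frac{\lambda}{c}\sqrt{c^2t^2-\|\mathbf{x}\|^2}\right),$$ where $I_1(z)=\sum_{k\ge0}(z/2)^{2k+1}/(k!(k+1)!)$. Then $u$ satisfies the three-dimensional telegraph equation $$\left(\frac{\partial^2}{\partial t^2}+2\lambda\frac{\partial}{\partial t}-c^2\Delta\right)u(\mathbf{x},t)=0,\qquad \Delta=\sum_{j=1}^3\frac{\partial^2}{\partial x_j^2},$$ in the region $\{(\mathbf{x},t):t>0,\ \|\mathbf{x}\|<ct\}$.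
   Context: The function $u$ is (known to be) the density of $P\{\mathbf{U}_3(t)\in d\mathbf{x},\ \cup_{k\ge1}\{N(t)=2k+1\}\}$ for a random flight $\mathbf{U}_3(t)$ in $\mathbb{R}^3$ with speed $c$ whose changes of direction occur only at the even-numbered events of a homogeneous Poisson process $N(t)$ of rate $\lambda$. *)

From Stdlib Require Import Reals Factorial.
From Coquelicot Require Import Coquelicot.
Open Scope R_scope.

Definition bessel_I1 (z : R) : R :=
  Series (fun k : nat => (z / 2) ^ (2 * k + 1) / (INR (fact k) * INR (fact (S k)))).

Definition norm3 (x1 x2 x3 : R) : R := sqrt (x1 ^ 2 + x2 ^ 2 + x3 ^ 2).

(* The function u(x,t); meaningful on t>0, ||x|| < c t *)
Definition tg_u (c lam x1 x2 x3 t : R) : R :=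
  exp (- lam * t) / PI * (lam / (2 * c)) ^ 2
  * / sqrt (c ^ 2 * t ^ 2 - norm3 x1 x2 x3 ^ 2)
  * bessel_I1 (lam / c * sqrt (c ^ 2 * t ^ 2 - norm3 x1 x2 x3 ^ 2)).

Definition tg_dt (c lam x1 x2 x3 t : R) : R := Derive (fun s => tg_u c lam x1 x2 x3 s) t.
Definition tg_dtt (c lam x1 x2 x3 t : R) : R := Derive (fun s => tg_dt c lam x1 x2 x3 s) t.
Definition tg_d1 (c lam x1 x2 x3 t : R) : R := Derive (fun y => tg_u c lam y x2 x3 t) x1.
Definition tg_d11 (c lam x1 x2 x3 t : R) : R := Derive (fun y => tg_d1 c lam y x2 x3 t) x1.
Definition tg_d2 (c lam x1 x2 x3 t : R) : R := Derive (fun y => tg_u c lam x1 y x3 t) x2.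
Definition tg_d22 (c lam x1 x2 x3 t : R) : R := Derive (fun y => tg_d2 c lam x1 y x3 t) x2.
Definition tg_d3 (c lam x1 x2 x3 t : R) : R := Derive (fun y => tg_u c lam x1 x2 y t) x3.
Definition tg_d33 (c lam x1 x2 x3 t : R) : R := Derive (fun y => tg_d3 c lam x1 x2 y t) x3.

(** With [a = lam / c] and [S = c^2 t^2 - |x|^2], [u] is [A exp(-lam t) G(S)],
    where [G(s) = I_1(a sqrt s) / sqrt s] is the entire power series
    [sum_k (a/2)^(2k+1) s^k / (k! (k+1)!)].  Termwise, [G] solves
    [4 s G'' + 8 G' = a^2 G].  By the chain rule, the time part of the telegraph
    operator contributes [A exp(-lam t) (-lam^2 G + 2 c^2 G' + 4 c^4 t^2 G'')]
    and [-c^2 Delta] contributes [A exp(-lam t) (6 c^2 G' - 4 c^2 |x|^2 G'')];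
    the sum is [A exp(-lam t) (c^2 (4 S G'' + 8 G') - lam^2 G)], which vanishes
    by the ODE since [c^2 a^2 = lam^2]. *)

From Stdlib Require Import Reals Factorial Lra Lia.
From Coquelicot Require Import Coquelicot.
Open Scope R_scope.

Definition I1_coef (a : R) (k : nat) : R :=
  (a / 2) ^ (2 * k + 1) / (INR (fact k) * INR (fact (S k))).

Definition bessel_profile (a s : R) : R := / sqrt s * bessel_I1 (a * sqrt s).

Definition bessel_ratio (a : R) : R -> R := PSeries (I1_coef a).
Definition bessel_ratio' (a : R) : R -> R := PSeries (PS_derive (I1_coef a)).
Definition bessel_ratio'' (a : R) : R -> R :=
  PSeries (PS_derive (PS_derive (I1_coef a))).

Section BesselRatio.

Variable a : R.

Lemma I1_coef_succ (k : nat) :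
  I1_coef a (S k) = I1_coef a k * ((a / 2) ^ 2 / (INR (S k) * INR (S (S k)))).
Proof.
  unfold I1_coef.
  replace (2 * S k + 1)%nat with (2 * k + 1 + 2)%nat by lia.
  rewrite pow_add.
  change (fact (S (S k))) with (S (S k) * fact (S k))%nat.
  change (fact (S k)) with (S k * fact k)%nat.
  rewrite !mult_INR.
  field; repeat split; try apply INR_fact_neq_0; apply not_0_INR; lia.
Qed.

Lemma bessel_profile_eq_ratio (s : R) : 0 < s -> bessel_profile a s = bessel_ratio a s.
Proof.
  intros hs. unfold bessel_profile, bessel_I1, bessel_ratio, PSeries.
  assert (hq : 0 < sqrt s) by (apply sqrt_lt_R0; lra).
  rewrite (Series_ext _ (fun k => sqrt s * (I1_coef a k * s ^ k))).
  - rewrite Series_scal_l. field. lra.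
  - intros k. unfold I1_coef.
    replace (a * sqrt s / 2) with (a / 2 * sqrt s) by field.
    rewrite Rpow_mult_distr, (pow_add (sqrt s)), (pow_mult (sqrt s)), pow2_sqrt by lra.
    field. split; apply INR_fact_neq_0.
Qed.

Hypothesis a_neq0 : a <> 0.

Lemma I1_coef_neq0 (k : nat) : I1_coef a k <> 0.
Proof.
  unfold I1_coef. apply Rmult_integral_contrapositive; split.
  - apply pow_nonzero; lra.
  - apply Rinv_neq_0_compat, Rmult_integral_contrapositive.
    split; apply INR_fact_neq_0.
Qed.

Lemma CV_radius_I1_coef : CV_radius (I1_coef a) = p_infty.
Proof.
  apply CV_radius_infinite_DAlembert; [apply I1_coef_neq0 |].
  apply is_lim_seq_ext with (fun n => (a / 2) ^ 2 * / (INR (S n) * INR (S (S n)))).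
  { intros n.
    assert (hratio : I1_coef a (S n) / I1_coef a n = (a / 2) ^ 2 / (INR (S n) * INR (S (S n))))
      by (rewrite I1_coef_succ; field; repeat split;
          try apply I1_coef_neq0; apply not_0_INR; lia).
    rewrite hratio, Rabs_right; [reflexivity |].
    apply Rle_ge, Rdiv_le_0_compat; [apply pow2_ge_0 |].
    apply Rmult_lt_0_compat; apply lt_0_INR; lia. }
  replace (Finite 0) with (Rbar_mult ((a / 2) ^ 2) (Rbar_inv p_infty))
    by (simpl; f_equal; ring).
  apply is_lim_seq_scal_l, is_lim_seq_inv; [| discriminate].
  apply (is_lim_seq_mult _ _ p_infty p_infty); [| | reflexivity].
  - apply (is_lim_seq_incr_1 INR), is_lim_seq_INR.
  - apply (is_lim_seq_incr_1 (fun n => INR (S n))), (is_lim_seq_incr_1 INR), is_lim_seq_INR.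
Qed.

Lemma CV_radius_PS_derive_I1_coef : CV_radius (PS_derive (I1_coef a)) = p_infty.
Proof. rewrite CV_radius_derive. apply CV_radius_I1_coef. Qed.

Lemma is_derive_bessel_ratio (s : R) : is_derive (bessel_ratio a) s (bessel_ratio' a s).
Proof. apply is_derive_PSeries. rewrite CV_radius_I1_coef. exact I. Qed.

Lemma is_derive_bessel_ratio' (s : R) : is_derive (bessel_ratio' a) s (bessel_ratio'' a s).
Proof. apply is_derive_PSeries. rewrite CV_radius_PS_derive_I1_coef. exact I. Qed.

(* Coefficientwise this is [4 (n+1) n c_(n+1) + 8 (n+1) c_(n+1) = a^2 c_n],
   i.e. the recurrence [I1_coef_succ]. *)
Lemma bessel_ratio_ode (s : R) :
  4 * s * bessel_ratio'' a s + 8 * bessel_ratio' a s = a ^ 2 * bessel_ratio a s.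
Proof.
  unfold bessel_ratio, bessel_ratio', bessel_ratio''.
  rewrite Rmult_assoc, <- PSeries_incr_1, <- !PSeries_scal, <- PSeries_plus.
  2: { apply CV_radius_inside. rewrite CV_radius_scal by lra.
       rewrite CV_radius_incr_1, CV_radius_derive, CV_radius_PS_derive_I1_coef.
       exact I. }
  2: { apply CV_radius_inside. rewrite CV_radius_scal by lra.
       rewrite CV_radius_PS_derive_I1_coef. exact I. }
  apply PSeries_ext. intros n.
  unfold PS_plus, PS_scal, PS_incr_1, PS_derive, plus, scal, zero; cbn -[INR].
  unfold mult; cbn -[INR].
  destruct n as [| m].
  - rewrite I1_coef_succ. simpl. field.
  - rewrite (I1_coef_succ (S m)), !S_INR. field.
    pose proof (pos_INR m). split; lra.
Qed.

End BesselRatio.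

Lemma locally_pos_quadratic (alpha beta y : R) :
  0 < alpha * y ^ 2 + beta -> locally y (fun z => 0 < alpha * z ^ 2 + beta).
Proof.
  intros hy.
  assert (hcont : continuous (fun z => alpha * z ^ 2 + beta) y)
    by (apply (ex_derive_continuous (fun z => alpha * z ^ 2 + beta)); auto_derive; exact I).
  apply hcont, (open_gt 0), hy.
Qed.

Section ExpProfile.

Variables (a A mu alpha beta : R) (F : R -> R).
Hypothesis a_neq0 : a <> 0.
Hypothesis F_eq :
  forall z, F z = A * exp (mu * z) * bessel_profile a (alpha * z ^ 2 + beta).

Lemma is_derive_exp_profile (y s : R) :
  alpha * y ^ 2 + beta = s -> 0 < s ->
  is_derive F y (A * exp (mu * y) * (mu * bessel_ratio a s + 2 * alpha * y * bessel_ratio' a s)).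
Proof.
  intros <- hs.
  apply is_derive_ext_loc with
    (fun z => A * exp (mu * z) * bessel_ratio a (alpha * z ^ 2 + beta)).
  { apply (filter_imp (fun z => 0 < alpha * z ^ 2 + beta)); [| now apply locally_pos_quadratic].
    intros z hz. rewrite F_eq, bessel_profile_eq_ratio by exact hz. reflexivity. }
  auto_derive.
  - eexists. apply (is_derive_bessel_ratio a a_neq0).
  - rewrite (is_derive_unique _ _ _ (is_derive_bessel_ratio a a_neq0 _)).
    replace (alpha * (y * (y * 1)) + beta) with (alpha * y ^ 2 + beta) by ring. ring.
Qed.

Lemma is_derive2_exp_profile (y s : R) :
  alpha * y ^ 2 + beta = s -> 0 < s ->
  is_derive (fun z => Derive F z) y
    (A * exp (mu * y) * (mu ^ 2 * bessel_ratio a s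
       + (4 * mu * alpha * y + 2 * alpha) * bessel_ratio' a s
       + 4 * alpha ^ 2 * y ^ 2 * bessel_ratio'' a s)).
Proof.
  intros <- hs.
  apply is_derive_ext_loc with (fun z => A * exp (mu * z) *
    (mu * bessel_ratio a (alpha * z ^ 2 + beta)
     + 2 * alpha * z * bessel_ratio' a (alpha * z ^ 2 + beta))).
  { apply (filter_imp (fun z => 0 < alpha * z ^ 2 + beta)); [| now apply locally_pos_quadratic].
    intros z hz. symmetry. now apply is_derive_unique, is_derive_exp_profile. }
  auto_derive.
  - split; [| split; [| exact I]]; eexists;
      [apply (is_derive_bessel_ratio a a_neq0) | apply (is_derive_bessel_ratio' a a_neq0)].
  - rewrite (is_derive_unique _ _ _ (is_derive_bessel_ratio a a_neq0 _)),
      (is_derive_unique _ _ _ (is_derive_bessel_ratio' a a_neq0 _)).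
    replace (alpha * (y * (y * 1)) + beta) with (alpha * y ^ 2 + beta) by ring. ring.
Qed.

End ExpProfile.

Lemma tg_u_eq (c lam x1 x2 x3 t : R) :
  tg_u c lam x1 x2 x3 t = / PI * (lam / (2 * c)) ^ 2 * exp (- lam * t)
    * bessel_profile (lam / c) (c ^ 2 * t ^ 2 - (x1 ^ 2 + x2 ^ 2 + x3 ^ 2)).
Proof.
  unfold tg_u, bessel_profile, norm3.
  rewrite pow2_sqrt by (pose proof (pow2_ge_0 x1); pose proof (pow2_ge_0 x2);
                        pose proof (pow2_ge_0 x3); lra).
  unfold Rdiv. ring.
Qed.

Lemma tg_u_eq_slice (c lam x1 x2 x3 t y r : R) :
  x1 ^ 2 + x2 ^ 2 + x3 ^ 2 = y ^ 2 + r ->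
  tg_u c lam x1 x2 x3 t = / PI * (lam / (2 * c)) ^ 2 * exp (- lam * t) * exp (0 * y)
    * bessel_profile (lam / c) (-1 * y ^ 2 + (c ^ 2 * t ^ 2 - r)).
Proof.
  intros hr. rewrite tg_u_eq, hr, Rmult_0_l, exp_0, Rmult_1_r.
  do 2 f_equal. ring.
Qed.

Lemma norm3_lt_sq (c x1 x2 x3 t : R) :
  0 < c -> 0 < t -> norm3 x1 x2 x3 < c * t -> 0 < c ^ 2 * t ^ 2 - (x1 ^ 2 + x2 ^ 2 + x3 ^ 2).
Proof.
  unfold norm3. intros hc ht hx.
  pose proof (sqrt_pos (x1 ^ 2 + x2 ^ 2 + x3 ^ 2)).
  rewrite <- (pow2_sqrt (x1 ^ 2 + x2 ^ 2 + x3 ^ 2))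
    by (pose proof (pow2_ge_0 x1); pose proof (pow2_ge_0 x2); pose proof (pow2_ge_0 x3); lra).
  nra.
Qed.

Theorem theorem4p1 (c lam : R) (hc : 0 < c) (hlam : 0 < lam)
  (x1 x2 x3 t : R) (ht : 0 < t) (hx : norm3 x1 x2 x3 < c * t) :
  (* all partial derivatives involved exist *)
  ex_derive (fun s => tg_u c lam x1 x2 x3 s) t /\
  ex_derive (fun s => tg_dt c lam x1 x2 x3 s) t /\
  ex_derive (fun y => tg_u c lam y x2 x3 t) x1 /\
  ex_derive (fun y => tg_d1 c lam y x2 x3 t) x1 /\
  ex_derive (fun y => tg_u c lam x1 y x3 t) x2 /\
  ex_derive (fun y => tg_d2 c lam x1 y x3 t) x2 /\
  ex_derive (fun y => tg_u c lam x1 x2 y t) x3 /\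
  ex_derive (fun y => tg_d3 c lam x1 x2 y t) x3 /\
  (* the telegraph equation *)
  tg_dtt c lam x1 x2 x3 t + 2 * lam * tg_dt c lam x1 x2 x3 t
  - c ^ 2 * (tg_d11 c lam x1 x2 x3 t + tg_d22 c lam x1 x2 x3 t + tg_d33 c lam x1 x2 x3 t) = 0.
Proof.
  set (a := lam / c). set (A := / PI * (lam / (2 * c)) ^ 2).
  set (S := c ^ 2 * t ^ 2 - (x1 ^ 2 + x2 ^ 2 + x3 ^ 2)).
  assert (a_neq0 : a <> 0) by (apply Rgt_not_eq, Rdiv_lt_0_compat; lra).
  assert (hS : 0 < S) by now apply norm3_lt_sq.
  assert (Ut : forall s, tg_u c lam x1 x2 x3 s
      = A * exp (- lam * s) * bessel_profile a (c ^ 2 * s ^ 2 + - (x1 ^ 2 + x2 ^ 2 + x3 ^ 2)))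
    by (intros; apply tg_u_eq).
  assert (U1 : forall y, tg_u c lam y x2 x3 t = A * exp (- lam * t) * exp (0 * y)
      * bessel_profile a (-1 * y ^ 2 + (c ^ 2 * t ^ 2 - (x2 ^ 2 + x3 ^ 2))))
    by (intros; apply tg_u_eq_slice; ring).
  assert (U2 : forall y, tg_u c lam x1 y x3 t = A * exp (- lam * t) * exp (0 * y)
      * bessel_profile a (-1 * y ^ 2 + (c ^ 2 * t ^ 2 - (x1 ^ 2 + x3 ^ 2))))
    by (intros; apply tg_u_eq_slice; ring).
  assert (U3 : forall y, tg_u c lam x1 x2 y t = A * exp (- lam * t) * exp (0 * y)
      * bessel_profile a (-1 * y ^ 2 + (c ^ 2 * t ^ 2 - (x1 ^ 2 + x2 ^ 2))))
    by (intros; apply tg_u_eq_slice; ring).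
  pose proof (is_derive_exp_profile _ _ _ _ _ _ a_neq0 Ut t S eq_refl hS) as Dt.
  pose proof (is_derive2_exp_profile _ _ _ _ _ _ a_neq0 Ut t S eq_refl hS) as Dtt.
  assert (eS1 : -1 * x1 ^ 2 + (c ^ 2 * t ^ 2 - (x2 ^ 2 + x3 ^ 2)) = S) by (unfold S; ring).
  assert (eS2 : -1 * x2 ^ 2 + (c ^ 2 * t ^ 2 - (x1 ^ 2 + x3 ^ 2)) = S) by (unfold S; ring).
  assert (eS3 : -1 * x3 ^ 2 + (c ^ 2 * t ^ 2 - (x1 ^ 2 + x2 ^ 2)) = S) by (unfold S; ring).
  pose proof (is_derive_exp_profile _ _ _ _ _ _ a_neq0 U1 x1 S eS1 hS) as D1.
  pose proof (is_derive2_exp_profile _ _ _ _ _ _ a_neq0 U1 x1 S eS1 hS) as D11.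
  pose proof (is_derive_exp_profile _ _ _ _ _ _ a_neq0 U2 x2 S eS2 hS) as D2.
  pose proof (is_derive2_exp_profile _ _ _ _ _ _ a_neq0 U2 x2 S eS2 hS) as D22.
  pose proof (is_derive_exp_profile _ _ _ _ _ _ a_neq0 U3 x3 S eS3 hS) as D3.
  pose proof (is_derive2_exp_profile _ _ _ _ _ _ a_neq0 U3 x3 S eS3 hS) as D33.
  repeat split; try (eexists; eassumption).
  rewrite (is_derive_unique _ _ _ Dt : tg_dt c lam x1 x2 x3 t = _),
    (is_derive_unique _ _ _ Dtt : tg_dtt c lam x1 x2 x3 t = _),
    (is_derive_unique _ _ _ D11 : tg_d11 c lam x1 x2 x3 t = _),
    (is_derive_unique _ _ _ D22 : tg_d22 c lam x1 x2 x3 t = _),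
    (is_derive_unique _ _ _ D33 : tg_d33 c lam x1 x2 x3 t = _), !Rmult_0_l, exp_0.
  transitivity (A * exp (- lam * t) * (c ^ 2 * (4 * S * bessel_ratio'' a S + 8 * bessel_ratio' a S)
                                      - lam ^ 2 * bessel_ratio a S)).
  - unfold S. ring.
  - rewrite bessel_ratio_ode by exact a_neq0. unfold a. field. lra.
Qed.
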